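(* $\mathcal M\subset(\gamma\mathcal S)^{\#}=(\tilde\gamma(\mathcal S^* ))^{\#}$. In particular, for every mild mixing system $(X,T)$, all nonempty open $U,V\subset X$, and every $A\subset\mathbb N$ containing a translate of an SIP set, the set $N(U,V)\cap A$ contains a translate of an SIP set.
   Context: A dynamical system $(X,T)$: $X$ compact metric, $T$ a homeomorphism. $\mathbb N=\{1,2,\dots\}$; $N(U,V)=\{n\in\mathbb N:T^n(U)\cap V\ne\emptyset\}$. For finite $F\subset\mathbb Z$, $\sigma_F$ is the sum of its elements ($\sigma_\emptyset=0$); $IP(A)=\{\sigma_F:F\subset A\text{ finite}\}$, $SIP(A)=\{a-b:a,b\in IP(A)\}$. A family on $\mathbb N$ is a collection of subsets closed under supersets; its dual is $\mathcal F^*=\{B: B\cap A\ne\emptyset\ \forall A\in\mathcal F\}$; its sharp dual is $\mathcal F^{\#}=\{A: A\cap B\in\mathcal F\ \forall B\in\mathcal F\}$. $\mathcal S$ is the family of SIP sets: $B\subset\mathbb N$ with $SIP(L)\cap\mathbb N\subset B$ for some infinite $L\subset\mathbb N$. $\gamma\mathcal S$ is the family of sets containing a translate of an SIP set, i.e. $B\subset\mathbb N$ such that $(SIP(L)+u)\cap\mathbb N\subset B$ for some infinite $L\subset\mathbb N$, $u\in\mathbb Z$. For a family $\mathcal F$, $\tilde\gamma\mathcal F=\{A\subset\mathbb N:(A+n)\cap\mathbb N\in\mathcal F\text{ for all }n\in\mathbb Z\}$. A system is mild mixing if for all nonempty open $U,V$, $N(U,V)\in\mathcal S^*$. $\mathcal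 M$ is the family of subsets of $\mathbb N$ containing some $N(U,V)$ with $(X,T)$ mild mixing and $U,V\subset X$ nonempty open. *)

From HB Require Import structures.
From mathcomp Require Import all_boot all_order all_algebra.
From mathcomp Require Import all_classical all_reals all_analysis.
From mathcomp Require Import Rstruct Rstruct_topology.
Set Implicit Arguments. Unset Strict Implicit. Unset Printing Implicit Defensive.
Import Order.TTheory GRing.Theory Num.Theory.
Local Open Scope classical_set_scope.
Local Open Scope ring_scope.

(* Subsets of N = {1,2,...} are represented as sets of nat contained in Npos. *)
Definition Npos : set nat := [set n | (0 < n)%N].

Definition IP (L : set nat) : set int :=
  [set z | exists s : seq nat, uniq s /\ (forall x, x \in s -> L x) /\
           z = ((\sum_(x <- s) x)%N)%:Z].

Definition SIP (L : set nat) : set int :=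
  [set z | exists a b, IP L a /\ IP L b /\ z = a - b].

Definition Sfam : set (set nat) := [set B | B `<=` Npos /\
  exists L : set nat, L `<=` Npos /\ infinite_set L /\
    (forall n : nat, (0 < n)%N -> SIP L n%:Z -> B n)].

Definition gammaS : set (set nat) := [set B | B `<=` Npos /\
  exists (L : set nat) (u : int), L `<=` Npos /\ infinite_set L /\
    (forall n : nat, (0 < n)%N -> (exists z, SIP L z /\ n%:Z = z + u) -> B n)].

Definition shiftN (A : set nat) (n : int) : set nat :=
  [set m | (0 < m)%N /\ exists a, A a /\ m%:Z = a%:Z + n].

Definition gtilde (F : set (set nat)) : set (set nat) :=
  [set A | A `<=` Npos /\ forall n : int, F (shiftN A n)].

Definition dualF (F : set (set nat)) : set (set nat) :=
  [set B | B `<=` Npos /\ forall A, F A -> B `&` A !=set0].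

Definition sharpF (F : set (set nat)) : set (set nat) :=
  [set A | A `<=` Npos /\ forall B, F B -> F (A `&` B)].

Definition Nret (X : Type) (T : X -> X) (U V : set X) : set nat :=
  [set n | (0 < n)%N /\ (iter n T @` U) `&` V !=set0].

Definition homeomorphism (X : topologicalType) (T : X -> X) : Prop :=
  exists Tinv : X -> X, [/\ cancel T Tinv, cancel Tinv T,
                           continuous T & continuous Tinv].

(* (X,T) is a dynamical system: X compact metric (Hausdorff pseudometric
   space over the reals), T a homeomorphism. *)
Definition dyn_system (X : pseudoMetricType Rdefinitions.R) (T : X -> X) : Prop :=
  [/\ hausdorff_space X, compact [set: X] & homeomorphism T].

Definition mild_mixing (X : pseudoMetricType Rdefinitions.R) (T : X -> X) : Prop :=
  forall U V : set X, open U -> U !=set0 -> open V -> V !=set0 ->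
    dualF Sfam (Nret T U V).

Definition Mfam : set (set nat) := [set A | A `<=` Npos /\
  exists (X : pseudoMetricType Rdefinitions.R) (T : X -> X) (U V : set X),
    [/\ dyn_system T, mild_mixing T, open U /\ U !=set0,
        open V /\ V !=set0 & Nret T U V `<=` A]].

From mathcomp Require Import all_boot all_order all_algebra.
From mathcomp Require Import all_classical all_reals all_analysis.
From mathcomp Require Import Rstruct Rstruct_topology.
From mathcomp Require Import zify.
(** For the first part let N(U,V) come from a mild mixing system and let B
  contain (SIP(L) + u) cap N.  Writing N_z(U,V) for the integer return times,
  we build p_0 < p_1 < ... and z0 such that every z in SIP({p_k}) has
  u + z0 + z in N_z(U,V) and z0 + z in SIP(L).  At each stage the finitely
  many open sets O_r = U cap T^-(u+r) V (r obtained so far) are nonempty;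
  topological transitivity yields a nonempty open W whose returns to itself
  are common returns of all the O_r, and mild mixing gives a return time p of
  W in SIP(Q), for an infinite Q inside L lying beyond every element of L
  used so far, so that r + p and r - p stay in SIP(L).  Hence N(U,V) cap B
  contains (SIP({p_k}) + u + z0) cap N.

  The second part is duality bookkeeping: tilde-gamma of the dual of S is the
  dual of gamma S, and an upward closed family has the same sharp dual as its
  dual. *)

Set Implicit Arguments. Unset Strict Implicit. Unset Printing Implicit Defensive.
Import Order.TTheory GRing.Theory Num.Theory.
Local Open Scope classical_set_scope.
Local Open Scope ring_scope.

Lemma leq_mem_sum (s : seq nat) x : x \in s -> (x <= \sum_(y <- s) y)%N.
Proof.
elim: s => //= y s IH; rewrite inE big_cons => /orP [/eqP->|/IH xs].
  exact: leq_addr.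
exact: leq_trans xs (leq_addl _ _).
Qed.

Lemma infinite_natP (L : set nat) :
  infinite_set L <-> forall N, exists2 x, L x & (N < x)%N.
Proof.
split=> [infL N|unbL /finite_seqP [s sL]].
  apply: contrapT => noL; apply: infL.
  apply: (sub_finite_set _ (finite_II N.+1)) => x Lx /=.
  by rewrite ltnS leqNgt; apply/negP => Nx; apply: noL; exists x.
have [x Lx] := unbL (\sum_(y <- s) y)%N.
by move: Lx; rewrite sL /= => /leq_mem_sum; rewrite leqNgt => /negP.
Qed.

Lemma IP_subset (A B : set nat) : A `<=` B -> IP A `<=` IP B.
Proof. by move=> AB _ [s [us [sA ->]]]; exists s; split=> //; split=> // x /sA /AB. Qed.

Lemma SIP_subset (A B : set nat) : A `<=` B -> SIP A `<=` SIP B.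
Proof.
move=> AB _ [a [b [Aa [Ab ->]]]]; exists a, b.
by split; [exact: (IP_subset AB) Aa | split; first exact: (IP_subset AB) Ab].
Qed.

Lemma SIPN (L : set nat) z : SIP L z -> SIP L (- z).
Proof. by move=> [a [b [La [Lb ->]]]]; exists b, a; rewrite opprB. Qed.

Lemma SIP_set1 (w : nat) : SIP [set w] w%:Z.
Proof.
exists w%:Z, 0; split; last split; last by rewrite subr0.
  by exists [:: w]; rewrite big_seq1; split=> //; split=> // x; rewrite inE => /eqP.
by exists [::]; rewrite big_nil.
Qed.

Lemma IP_setU (A B : set nat) a b : A `&` B = set0 ->
  IP A a -> IP B b -> IP (A `|` B) (a + b).
Proof.
move=> AB0 [s [us [sA ->]]] [t [ut [tB ->]]]; exists (s ++ t); split.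
  rewrite cat_uniq us ut andbT; apply/hasPn => x /tB Bx.
  by apply/negP => /sA Ax; have : (A `&` B) x by []; rewrite AB0.
by split; [move=> x; rewrite mem_cat => /orP[/sA|/tB]; [left|right]
          | rewrite big_cat PoszD].
Qed.

Lemma SIP_setU (A B : set nat) z1 z2 : A `&` B = set0 ->
  SIP A z1 -> SIP B z2 -> SIP (A `|` B) (z1 + z2).
Proof.
move=> AB0 [a1 [b1 [Aa [Ab ->]]]] [a2 [b2 [Ba [Bb ->]]]].
exists (a1 + a2), (b1 + b2); split; first exact: IP_setU.
by split; [exact: IP_setU | rewrite addrACA opprD].
Qed.

Lemma SIP_bounded (L : set nat) z : SIP L z -> exists m, SIP (L `&` `I_m) z.
Proof.
move=> [_ [_ [[s [us [sL ->]]] [[t [ut [tL ->]]] ->]]]].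
exists (\sum_(x <- s) x + \sum_(x <- t) x).+1%N.
exists (\sum_(x <- s) x)%N%:Z, (\sum_(x <- t) x)%N%:Z; split; last split=> //.
  exists s; split=> //; split=> // x xs; split; first exact: sL.
  by have := leq_mem_sum xs; rewrite /= ltnS => /leq_trans; apply; exact: leq_addr.
exists t; split=> //; split=> // x xt; split; first exact: tL.
by have := leq_mem_sum xt; rewrite /= ltnS => /leq_trans; apply; exact: leq_addl.
Qed.

Lemma sum_uniq_split (r : seq nat) y : uniq r ->
  \sum_(x <- r) x = ((y \in r) * y + \sum_(x <- r | x != y) x)%N.
Proof.
move=> ur; have [yr|yNr] := boolP (y \in r).
  by rewrite (bigD1_seq y) // mul1n.
rewrite mul0n add0n big_seq_cond [RHS]big_seq_cond; apply: eq_bigl => x.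
by case: (boolP (x \in r)) => //= xr; apply/esym/eqP => xy; rewrite -xy xr in yNr.
Qed.

Section SIPImageInduction.
Variables (p : nat -> nat) (P : nat -> int -> Prop) (z0 : int).
Hypothesis P0 : P 0%N z0.
Hypothesis PS : forall k z, P k z ->
  [/\ P k.+1 z, P k.+1 (z + (p k)%:Z) & P k.+1 (z - (p k)%:Z)].

Lemma SIP_image_ind K z : SIP (p @` `I_K) z -> P K (z0 + z).
Proof.
elim: K z => [|K IH] _ [_ [_ [[s [us [sI ->]]] [[t [ut [tI ->]]] ->]]]].
  have nil0 r : (forall x, x \in r -> (p @` `I_0) x) -> r = [::].
    by case: r => // x r /(_ x (mem_head _ _)) [].
  by rewrite (nil0 s sI) (nil0 t tI) !big_nil subrr addr0.
have IP_below r : uniq r -> (forall x, x \in r -> (p @` `I_K.+1) x) ->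
    IP (p @` `I_K) (\sum_(x <- r | x != p K) x)%N%:Z.
  move=> ur rI; exists [seq x <- r | x != p K]; rewrite big_filter.
  split; first exact: filter_uniq.
  split=> // x; rewrite mem_filter => /andP [xpK /rI [i iK xi]].
  exists i => //=; rewrite ltn_neqAle -ltnS iK andbT.
  by apply: contraNneq xpK => iE; rewrite -xi iE.
have /IH /PS [Pz Pzp Pzm] : SIP (p @` `I_K)
    ((\sum_(x <- s | x != p K) x)%N%:Z - (\sum_(x <- t | x != p K) x)%N%:Z).
  by do 2!eexists; split; [exact: IP_below us sI | split; first exact: IP_below ut tI].
rewrite (sum_uniq_split (p K) us) (sum_uniq_split (p K) ut).
by case: (p K \in s); case: (p K \in t);
  [ move: Pz | move: Pzp | move: Pzm | move: Pz ]; congr P; lia.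
Qed.

End SIPImageInduction.

Lemma IP_range_bounded (p : nat -> nat) a : IP (range p) a ->
  exists K, IP (p @` `I_K) a.
Proof.
move=> [s [us [sp ->]]].
suff [K sK] : exists K, forall x, x \in s -> (p @` `I_K) x.
  by exists K, s.
elim: s {us} sp => [|y s IH] sp; first by exists 0%N.
have [|K sK] := IH; first by move=> x xs; apply: sp; rewrite inE xs orbT.
have [j _ <-] := sp y (mem_head _ _).
exists (maxn K j.+1) => x; rewrite inE => /orP [/eqP ->|/sK [i iK <-]].
  by exists j => //=; rewrite leq_max ltnSn orbT.
by exists i => //=; rewrite leq_max iK.
Qed.

Lemma SIP_range_ind (p : nat -> nat) (P : nat -> int -> Prop) (z0 : int) :
  P 0%N z0 ->
  (forall k z, P k z ->
    [/\ P k.+1 z, P k.+1 (z + (p k)%:Z) & P k.+1 (z - (p k)%:Z)]) ->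
  forall z, SIP (range p) z -> exists K, P K (z0 + z).
Proof.
move=> P0 PS _ [a [b [/IP_range_bounded [Ka Ia] [/IP_range_bounded [Kb Ib] ->]]]].
have sub K : (K <= maxn Ka Kb)%N -> p @` `I_K `<=` p @` `I_(maxn Ka Kb).
  by move=> KM _ [i iK <-]; exists i => //=; exact: leq_trans iK KM.
exists (maxn Ka Kb); apply: (SIP_image_ind (p := p)) => //.
exists a, b; split; first exact: (IP_subset (sub Ka (leq_maxl _ _))) Ia.
by split=> //; exact: (IP_subset (sub Kb (leq_maxr _ _))) Ib.
Qed.

Lemma SIP_sparse (L : set nat) (m K : nat) : infinite_set L ->
  exists Q : set nat, [/\ Q `<=` L, infinite_set Q, (forall x, Q x -> (m < x)%N)
    & forall z, SIP Q z -> z != 0 -> (K < absz z)%N].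
Proof.
move=> /infinite_natP unbL.
have /choice [g gP] : forall N, exists x, L x /\ (N < x)%N.
  by move=> N; have [x] := unbL N; exists x.
(* Each new term exceeds K + m plus the sum h j of all earlier terms, so the
   last term of a nonzero signed sum dominates it. *)
pose fix h j := if j is j'.+1 then (h j' + g (K + m + h j'))%N else 0%N.
pose q j := g (K + m + h j).
have qP j : L (q j) /\ (K + m + h j < q j)%N by exact: gP.
have jh j : (j <= h j)%N by elim: j => //= j; have [_] := qP j; rewrite -/(q j); lia.
exists (range q); split.
- by move=> _ [j _ <-]; case: (qP j).
- apply/infinite_natP => N; exists (q N); first by exists N.
  by have [_] := qP N; have := jh N; lia.
- by move=> _ [j _ <-]; have [_] := qP j; lia.
move=> z /(SIP_range_ind (P := fun J z => (absz z <= h J)%N /\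
    (z != 0 -> K < absz z)%N) (z0 := 0)) [].
- by split=> //; rewrite eqxx.
- move=> k z' [zh zK]; have [_] := qP k; rewrite /= -/(q k).
  by split; split=> [|/eqP]; lia.
- by move=> J; rewrite add0r => -[].
Qed.

Lemma SIP_bounded_seq (L : set nat) (zs : seq int) :
  {in zs, forall z, SIP L z} -> exists m, {in zs, forall z, SIP (L `&` `I_m) z}.
Proof.
elim: zs => [|z zs IH] zsL; first by exists 0%N.
have [m zsm] : exists m, {in zs, forall z, SIP (L `&` `I_m) z}.
  by apply: IH => r rzs; apply: zsL; rewrite inE rzs orbT.
have [mz Lz] := SIP_bounded (zsL z (mem_head _ _)).
have sub k : (k <= maxn m mz)%N -> L `&` `I_k `<=` L `&` `I_(maxn m mz).
  by move=> km x [Lx xk]; split=> //; exact: leq_trans xk km.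
exists (maxn m mz) => r; rewrite inE => /orP [/eqP ->|rzs].
  exact: (SIP_subset (sub _ (leq_maxr _ _))) Lz.
exact: (SIP_subset (sub _ (leq_maxl _ _))) (zsm r rzs).
Qed.

Lemma SIP_addB (L Q : set nat) (m : nat) r q : Q `<=` L ->
  (forall x, Q x -> (m < x)%N) -> SIP (L `&` `I_m) r -> SIP Q q ->
  SIP L (r + q) /\ SIP L (r - q).
Proof.
move=> QL Qm Lr Qq.
have disj : (L `&` `I_m) `&` Q = set0.
  by apply/seteqP; split=> // x [[_ /= xm] /Qm mx]; move: (ltn_trans xm mx); rewrite ltnn.
have sub : (L `&` `I_m) `|` Q `<=` L by move=> x [[]|/QL].
split; apply: (SIP_subset sub); apply: SIP_setU disj Lr _ => //; exact: SIPN.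
Qed.

Lemma SIP_sequence (G : int -> Prop) (z0 : int) : G z0 ->
  (forall (zs : seq int) (M : nat), {in zs, forall r, G r} ->
    exists2 p : nat, (M < p)%N & {in zs, forall r, G (r + p%:Z) /\ G (r - p%:Z)}) ->
  exists p : nat -> nat,
    (forall k, (k < p k)%N) /\ forall z, SIP (range p) z -> G (z0 + z).
Proof.
move=> Gz0 Gstep.
(* A state lists the values z0 + z, z a signed sum of the p chosen so far,
   together with the last p chosen. *)
pose grow (st : seq int * nat) (st' : seq int * nat) := [/\ (st.2 < st'.2)%N,
  st'.1 = st.1 ++ map (fun r => r + st'.2%:Z) st.1 ++ map (fun r => r - st'.2%:Z) st.1
  & {in st'.1, forall r, G r}].
have /choice [f fP] : forall st, exists st', {in st.1, forall r, G r} -> grow st st'.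
  move=> [zs M]; have [zsG|] := pselect {in zs, forall r, G r}; last first.
    by move=> NzsG; exists (zs, M).
  have [p Mp zspG] := Gstep zs M zsG.
  exists (zs ++ map (fun r => r + p%:Z) zs ++ map (fun r => r - p%:Z) zs, p).
  split=> // r; rewrite !mem_cat => /orP [/zsG //|/orP []] /mapP [r' r'zs ->];
  by case: (zspG r' r'zs).
pose st k := iter k f ([:: z0], 0%N).
have stG k : {in (st k).1, forall r, G r}.
  by elim: k => [r /[!inE] /eqP -> //|k IH]; case: (fP _ IH).
pose p k := (st k.+1).2.
have stp k : grow (st k) (st k.+1) by exact: fP (stG k).
have pS k : (p k < p k.+1)%N by case: (stp k.+1).
exists p; split; first by elim=> [|k IH]; [case: (stp 0%N) | have := pS k; lia].
have stS k r : r \in (st k).1 -> [/\ r \in (st k.+1).1,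
    r + (p k)%:Z \in (st k.+1).1 & r - (p k)%:Z \in (st k.+1).1].
  move=> rk; case: (stp k) => _ -> _; rewrite !mem_cat rk.
  by rewrite (map_f (fun r => r + (p k)%:Z) rk) (map_f (fun r => r - (p k)%:Z) rk) !orbT.
move=> z zS; have [K] := SIP_range_ind (P := fun k r => r \in (st k).1) (mem_head _ _) stS zS.
exact: stG.
Qed.

Definition upward_closed (F : set (set nat)) :=
  (forall B, F B -> B `<=` Npos) /\
  forall B B', F B -> B `<=` B' -> B' `<=` Npos -> F B'.

Lemma dualF_dualF_sub (F : set (set nat)) : upward_closed F ->
  dualF (dualF F) `<=` F.
Proof.
move=> [Fpos Fup] D [Dpos DF]; apply: contrapT => FND.
have [x [Dx [_ NDx //]]] : D `&` (Npos `\` D) !=set0.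
apply: DF; split=> [x [] //|B FB]; apply: contrapT => BD0; apply: FND.
apply: (Fup _ _ FB) _ Dpos => x Bx; apply: contrapT => NDx; apply: BD0.
by exists x; split=> //; split=> //; exact: Fpos FB _ Bx.
Qed.

Lemma sharpF_dualF (F : set (set nat)) : upward_closed F ->
  sharpF F = sharpF (dualF F).
Proof.
move=> Fup; apply/seteqP; split=> A [Apos AF]; split=> //.
  move=> C [Cpos CF]; split=> [x [_ /Cpos] //|B FB].
  by have [x [Cx [Ax Bx]]] := CF _ (AF B FB); exists x.
move=> B FB; apply: dualF_dualF_sub => //.
split=> [x [/Apos] //|C FC].
by have [_ /(_ B FB) [x [[Ax Cx] Bx]]] := AF C FC; exists x.
Qed.

Lemma gammaS_upward_closed : upward_closed gammaS.
Proof.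
split=> [B [] //|B B' [_ [L [u [Lpos [infL BL]]]]] BB' B'pos].
by split=> //; exists L, u; do 2!split=> //; move=> n n0 /(BL n n0) /BB'.
Qed.

Lemma Sfam_SIP (L : set nat) : L `<=` Npos -> infinite_set L ->
  Sfam [set k | (0 < k)%N /\ SIP L k%:Z].
Proof. by move=> Lpos infL; split=> [x [] //|]; exists L; do 2!split=> //. Qed.

Lemma Sfam_Npos : Sfam Npos.
Proof.
split=> //; exists Npos; do 2!split=> //.
by apply/infinite_natP => N; exists N.+1.
Qed.

Lemma gtilde_dualF_Sfam : gtilde (dualF Sfam) = dualF gammaS.
Proof.
apply/seteqP; split=> C [Cpos CS]; split=> //.
  move=> B [_ [L [u [Lpos [infL BL]]]]].
  have [_ /(_ _ (Sfam_SIP Lpos infL))] := CS (- u).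
  move=> [k [[k0 [a [Ca ka]]] [_ Lk]]]; exists a; split=> //.
  by apply: BL; [exact: Cpos | exists k%:Z; split=> //; lia].
move=> n; split=> [x [] //|B [_ [L [Lpos [infL BL]]]]].
have [w Lw w0] := (infinite_natP L).1 infL 0%N.
have [Q [QL infQ Qw Qsparse]] := SIP_sparse w (w + absz n) infL.
have Qpos : Q `<=` Npos by move=> x /QL /Lpos.
have [|a [Ca [a0 [z [Qz az]]]]] := CS [set k | (0 < k)%N /\
    exists z, SIP Q z /\ k%:Z = z + (w%:Z - n)].
  by split=> [x [] //|]; exists Q, (w%:Z - n); do 2!split=> //.
have zw : 0 < z + w%:Z.
  by case: (z =P 0) => [z0|/eqP /(Qsparse _ Qz)]; [rewrite z0|]; lia.
exists (absz (z + w%:Z)); split.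
  by split; [lia | exists a; split=> //; lia].
apply: BL; first lia.
rewrite gez0_abs; last exact: ltW.
have QwL : [set w] `|` Q `<=` L by move=> x [->|/QL].
apply: (SIP_subset QwL); rewrite addrC; apply: SIP_setU (SIP_set1 w) Qz.
by apply/seteqP; split=> // x [-> /Qw]; rewrite ltnn.
Qed.

Section IntegerIterates.
Variables (X : Type) (T Tinv : X -> X).
Hypotheses (TK : cancel T Tinv) (TinvK : cancel Tinv T).

Definition iterz (z : int) : X -> X :=
  match z with Posz n => iter n T | Negz n => iter n.+1 Tinv end.

Lemma iterzS z x : iterz (z + 1) x = T (iterz z x).
Proof.
case: z => [n|[|n]].
- by have -> : n%:Z + 1 = n.+1%:Z by lia.
- by rewrite (_ : Negz 0 + 1 = 0) /= ?TinvK //; lia.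
- by rewrite (_ : Negz n.+1 + 1 = Negz n) /= ?TinvK //; lia.
Qed.

Lemma iterzB1 z x : iterz (z - 1) x = Tinv (iterz z x).
Proof.
case: z => [[|n]|n].
- by rewrite (_ : 0 - 1 = Negz 0) //; lia.
- by rewrite (_ : n.+1%:Z - 1 = n%:Z) /= ?TK //; lia.
- by rewrite (_ : Negz n - 1 = Negz n.+1) //; lia.
Qed.

Lemma iterzD a b x : iterz (a + b) x = iterz a (iterz b x).
Proof.
elim/int_rect: a => [|n IH|n IH]; first by rewrite add0r.
  rewrite (_ : n.+1%:Z = n%:Z + 1); last by lia.
  by rewrite addrAC !iterzS IH.
rewrite (_ : - n.+1%:Z = - n%:Z - 1); last by lia.
by rewrite addrAC !iterzB1 IH.
Qed.

End IntegerIterates.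

Lemma continuous_iter (X : topologicalType) (f : X -> X) n :
  continuous f -> continuous (iter n f).
Proof.
move=> fC; elim: n => [|n IH] x; first exact: cvg_id.
exact: (continuous_comp (IH x) (fC _)).
Qed.

Lemma continuous_iterz (X : topologicalType) (T Tinv : X -> X) z :
  continuous T -> continuous Tinv -> continuous (iterz T Tinv z).
Proof. by case: z => n TC TinvC /=; exact: continuous_iter. Qed.

Section MildMixing.
Variables (X : pseudoMetricType Rdefinitions.R) (T Tinv : X -> X).
Hypotheses (TK : cancel T Tinv) (TinvK : cancel Tinv T).
Hypotheses (TC : continuous T) (TinvC : continuous Tinv).
Hypothesis mmT : mild_mixing T.

Local Notation iterz := (iterz T Tinv).

Definition return_times (U V : set X) : set int :=
  [set z | U `&` iterz z @^-1` V !=set0].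

Lemma open_iterz_preimage z (V : set X) : open V -> open (iterz z @^-1` V).
Proof. by apply: open_comp => x _; apply: continuous_iterz. Qed.

Lemma return_times_shift (U V : set X) w q :
  return_times (U `&` iterz w @^-1` V) (U `&` iterz w @^-1` V) q ->
  return_times U V (w + q) /\ return_times U V (w - q).
Proof.
move=> [x [[Ux Vx] [Uqx Vqx]]]; split; first by exists x; rewrite /= iterzD.
by exists (iterz q x); split=> //=; rewrite -iterzD // subrK.
Qed.

Lemma mild_mixing_return (U V : set X) (B : set nat) :
  open U -> U !=set0 -> open V -> V !=set0 -> Sfam B ->
  exists n : nat, [/\ (0 < n)%N, B n & return_times U V n].
Proof.
move=> oU nU oV nV SB; have [_ /(_ B SB)] := mmT oU nU oV nV.
by move=> [n [[n0 [_ [[x Ux <-] Vx]]] Bn]]; exists n; split=> //; exists x.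
Qed.

Lemma return_times_common (O : int -> set X) (zs : seq int) (U0 : set X) :
  open U0 -> U0 !=set0 -> {in zs, forall r, open (O r) /\ O r !=set0} ->
  exists W : set X, [/\ open W, W !=set0 &
    forall q, return_times W W q -> {in zs, forall r, return_times (O r) (O r) q}].
Proof.
elim: zs => [|r zs IH] oU0 nU0 Oopen; first by exists U0.
have [|W0 [oW0 nW0 W0P]] := IH oU0 nU0.
  by move=> r' r'zs; apply: Oopen; rewrite inE r'zs orbT.
have [oOr nOr] := Oopen r (mem_head _ _).
have [n [_ _ [y [Ory W0y]]]] := mild_mixing_return oOr nOr oW0 nW0 Sfam_Npos.
exists (O r `&` iterz n @^-1` W0); split.
- by apply: openI => //; exact: open_iterz_preimage.
- by exists y.
move=> q [x [[Orx W0x] [Orqx W0qx]]] r'; rewrite inE => /orP [/eqP ->|r'zs].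
  by exists x.
apply: (W0P q) => //; exists (iterz n x); split=> //.
change (W0 (iterz q (iterz n x))).
by rewrite -iterzD // addrC iterzD.
Qed.

Lemma return_SIP_extend (U V : set X) (u : int) (L : set nat) :
  open U -> U !=set0 -> open V -> infinite_set L ->
  forall (zs : seq int) (M : nat),
  {in zs, forall r, return_times U V (u + r) /\ SIP L r} ->
  exists2 p : nat, (M < p)%N & {in zs, forall r,
    (return_times U V (u + (r + p%:Z)) /\ SIP L (r + p%:Z)) /\
    (return_times U V (u + (r - p%:Z)) /\ SIP L (r - p%:Z))}.
Proof.
move=> oU nU oV infL zs M zsG.
pose O r := U `&` iterz (u + r) @^-1` V.
have [|W [oW nW WP]] := return_times_common (O := O) (zs := zs) oU nU.
  move=> r /zsG [[x Ox] _]; split; last by exists x.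
  by apply: openI => //; exact: open_iterz_preimage.
have [m zsm] := SIP_bounded_seq (fun r rzs => (zsG r rzs).2).
have [Q [QL infQ Qm Qsparse]] := SIP_sparse m M infL.
have Qpos : Q `<=` Npos by move=> x /Qm /(leq_ltn_trans (leq0n m)).
have [p [p0 [_ Qp] Wp]] := mild_mixing_return oW nW oW nW (Sfam_SIP Qpos infQ).
exists p => [|r rzs]; first by have := Qsparse _ Qp; rewrite absz_nat; apply; lia.
have [Gp Gm] := return_times_shift (WP _ Wp r rzs).
have [Lp Lm] := SIP_addB QL Qm (zsm r rzs) Qp.
by rewrite !addrA; split; split.
Qed.

End MildMixing.

Lemma Mfam_sub_sharpF_gammaS : Mfam `<=` sharpF gammaS.
Proof.
move=> A [Apos [X [T [U [V [[_ _ [Tinv [TK TinvK TC TinvC]]] mmT [oU nU] [oV nV] NA]]]]]].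
split=> // B [_ [L [u [Lpos [infL BL]]]]].
pose return_SIP r := return_times T Tinv U V (u + r) /\ SIP L r.
have oVu : open (iterz T Tinv u @^-1` V) by exact: open_iterz_preimage TC TinvC _ _ oV.
have nVu : iterz T Tinv u @^-1` V !=set0.
  by have [v Vv] := nV; exists (iterz T Tinv (- u) v); rewrite /= -iterzD // subrr.
have [z0 [_ [_ Lz0] Uz0]] :=
  mild_mixing_return Tinv mmT oU nU oVu nVu (Sfam_SIP Lpos infL).
have [||p [pk pG]] := SIP_sequence (G := return_SIP) (z0 := z0%:Z).
- by split=> //; case: Uz0 => x [Ux Vx]; exists x; split=> //=; rewrite iterzD.
- exact: return_SIP_extend.
split=> [x [/Apos] //|]; exists (range p), (u + z0%:Z); split.
  by move=> _ [k _ <-]; exact: leq_ltn_trans (leq0n k) (pk k).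
split; first by apply/infinite_natP => N; exists (p N); [exists N | exact: pk].
move=> n n0 [z [zS nz]]; have [[x [Ux Vx]] Lz] := pG z zS.
have nE : u + (z0%:Z + z) = n%:Z by lia.
rewrite nE in Vx; split; first by apply: NA; split=> //; exists (iter n T x).
by apply: BL => //; exists (z0%:Z + z); split=> //; lia.
Qed.

Theorem theorem5p2 :
  Mfam `<=` sharpF gammaS /\ sharpF gammaS = sharpF (gtilde (dualF Sfam)).
Proof.
split; first exact: Mfam_sub_sharpF_gammaS.
by rewrite gtilde_dualF_Sfam; apply: sharpF_dualF; exact: gammaS_upward_closed.
Qed.
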